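(* Let $P$ be a pattern, $S$ a schedule for $P$, and $L$ the relation set produced by the restriction generation procedure. Every pair in $L$ has the form $(S[a],S[b])$ with $a<b$. For each $k\in\{0,\dots,n-1\}$ such that some pair $(S[z],S[k])$ lies in $L$, let $c_k$ be the largest index $z$ with $(S[z],S[k])\in L$, and let $L'=\{(S[c_k],S[k])\}$ be the set of these chosen pairs. Then for every map $f:V(P)\to\mathbb{R}$, if $f(S[c_k])>f(S[k])$ for every chosen pair $(S[c_k],S[k])\in L'$, then $f(u)>f(w)$ for every $(u,w)\in L$.
   Context: A pattern $P$ is a finite simple connected graph on $n$ labeled vertices; $\mathrm{Aut}(P)$ is its automorphism group (bijections $V(P)\to V(P)$ preserving adjacency and non-adjacency). A schedule for $P$ is a sequence $S=(S[0],\dots,S[n-1])$ listing every vertex of $P$ exactly once such that each $S[k]$ with $k\ge 1$ is adjacent in $P$ to some $S[j]$ with $j<k$. Restriction generation procedure: set $A_0=\mathrm{Aut}(P)$ and, for $i=0,1,\dots,n-1$, add to $L$ every pair $(S[i],x(S[i]))$ with $x\in A_i$ and $x(S[i])\neq S[i]$, then set $A_{i+1}=\{x\in A_i : x(S[i])=S[i]\}$. Equivalently, $L=\{(S[i],x(S[i])) : 0\le i<n,\ x\in\mathrm{Aut}(P),\ x(S[j])=S[j]\text{ for all } j<i,\ x(S[i])\ne S[i]\}$. *)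

From HB Require Import structures.
From mathcomp Require Import all_boot all_order all_algebra all_fingroup.
Set Implicit Arguments. Unset Strict Implicit. Unset Printing Implicit Defensive.

Definition simple_graph n (e : rel 'I_n) : Prop :=
  (forall u v, e u v = e v u) /\ (forall u, ~~ e u u).

Definition connected_graph n (e : rel 'I_n) : Prop :=
  forall u v, connect e u v.

Definition pattern n (e : rel 'I_n) : Prop :=
  simple_graph e /\ connected_graph e.

Definition is_aut n (e : rel 'I_n) (x : {perm 'I_n}) : Prop :=
  forall u v, e (x u) (x v) = e u v.

Definition schedule n (e : rel 'I_n) (S : 'I_n -> 'I_n) : Prop :=
  bijective S /\
  forall k : 'I_n, 0 < k -> exists j : 'I_n, j < k /\ e (S j) (S k).

(* The restriction set L produced by the generation procedure (closed form). *)
Definition inL n (e : rel 'I_n) (S : 'I_n -> 'I_n) (u w : 'I_n) : Prop :=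
  exists (i : 'I_n) (x : {perm 'I_n}),
    [/\ is_aut e x,
        (forall j : 'I_n, j < i -> x (S j) = S j),
        x (S i) != S i,
        u = S i & w = x (S i)].

Definition chosen n (e : rel 'I_n) (S : 'I_n -> 'I_n) (k z : 'I_n) : Prop :=
  inL e S (S z) (S k) /\ forall z' : 'I_n, inL e S (S z') (S k) -> z' <= z.

From HB Require Import structures.
From mathcomp Require Import all_boot all_order all_algebra all_fingroup.
From Stdlib Require Import Classical.
Import Order.TTheory GRing.Theory Num.Theory.
Local Open Scope ring_scope.

(* If (S[a], S[b]) and (S[c], S[b]) are restrictions with a < c, witnessed by
   automorphisms x and y, then x y^-1 fixes S[0..a-1] and sends S[a] to S[c], so
   (S[a], S[c]) is a restriction too.  Hence the pairs ending in S[b] are implied,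
   through a chain of smaller targets, by the one with the largest source c_b;
   an induction on b then derives every restriction from the chosen ones. *)

Lemma ex_max_ord n (P : 'I_n -> Prop) (a : 'I_n) :
  P a -> exists z : 'I_n, P z /\ forall z', P z' -> (z' <= z)%N.
Proof.
have [m lt_na] : {m | (n - a < m)%N} := ubnP _.
elim: m => // m IH in a lt_na * => Pa.
have [[z' [Pz' lt_az']]|no_larger] := classic (exists z', P z' /\ (a < z')%N).
  apply: (IH z') => //; rewrite -ltnS (leq_trans _ lt_na) // ltnS.
  by rewrite ltn_sub2l ?ltn_ord.
exists a; split => // z' Pz'; rewrite leqNgt; apply/negP => lt_az'.
by apply: no_larger; exists z'.
Qed.

Section Restrictions.

Variables (n : nat) (e : rel 'I_n) (S : 'I_n -> 'I_n).
Hypothesis S_inj : injective S.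

Lemma inL_witness {a b : 'I_n} : inL e S (S a) (S b) ->
  exists x : {perm 'I_n}, [/\ is_aut e x,
    (forall j : 'I_n, (j < a)%N -> x (S j) = S j),
    x (S a) = S b & (a < b)%N].
Proof.
case=> i [x [aut_x fix_x moved_x /S_inj eq_ai xSi]]; subst i.
exists x; split=> //; rewrite ltnNge leq_eqVlt negb_or; apply/andP; split.
  by apply: contra moved_x => /eqP/val_inj eq_ba; rewrite -xSi eq_ba.
apply: contra moved_x => /fix_x xSb.
have -> : S a = S b by apply: (@perm_inj _ x); rewrite xSb.
by rewrite xSb.
Qed.

Lemma inL_lt {a b : 'I_n} : inL e S (S a) (S b) -> (a < b)%N.
Proof. by case/inL_witness=> x []. Qed.

Lemma inL_common_target {a b c : 'I_n} :
  inL e S (S a) (S b) -> inL e S (S c) (S b) -> (a < c)%N ->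
  inL e S (S a) (S c).
Proof.
move=> /inL_witness[x [aut_x fix_x xSa _]] /inL_witness[y [aut_y fix_y ySc _]] lt_ac.
have yVSb : (y^-1)%g (S b) = S c by rewrite -ySc permK.
exists a, (x * y^-1)%g; split=> //; rewrite ?permM ?xSa ?yVSb //.
- by move=> u v; rewrite !permM -(aut_y ((y^-1)%g (x u))) !permKV aut_x.
- move=> j lt_ja; rewrite permM fix_x //; apply: (@perm_inj _ y).
  by rewrite permKV fix_y // (ltn_trans lt_ja lt_ac).
- by apply: contraTneq lt_ac => /S_inj ->; rewrite ltnn.
Qed.

Lemma inL_chosen {a b : 'I_n} : inL e S (S a) (S b) ->
  exists c : 'I_n, chosen e S b c /\ (a <= c)%N.
Proof.
move=> Lab; have [c [Lcb c_max]] := @ex_max_ord _ (fun z => inL e S (S z) (S b)) _ Lab.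
by exists c; split; [split | apply: c_max].
Qed.

Lemma chosen_order_inL (R : realFieldType) (f : 'I_n -> R) :
  (forall k z : 'I_n, chosen e S k z -> f (S k) < f (S z)) ->
  forall a b : 'I_n, inL e S (S a) (S b) -> f (S b) < f (S a).
Proof.
move=> f_chosen a b; have [m lt_bm] := ubnP b.
elim: m => // m IH in a b lt_bm * => Lab.
have [c [chc le_ac]] := inL_chosen Lab.
have f_bc := f_chosen _ _ chc; case: chc => Lcb _.
have [lt_ac | eq_ac] := ltnP a c; last first.
  by have -> : a = c by apply: val_inj; apply/eqP; rewrite eqn_leq le_ac eq_ac.
apply: lt_trans f_bc (IH _ _ _ (inL_common_target Lab Lcb lt_ac)).
by rewrite -ltnS (leq_trans _ lt_bm) // ltnS inL_lt.
Qed.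

End Restrictions.

Lemma inL_indices n (e : rel 'I_n) (S : 'I_n -> 'I_n) :
  bijective S -> forall u w : 'I_n, inL e S u w ->
  exists a b : 'I_n, [/\ (a < b)%N, u = S a & w = S b].
Proof.
case=> g Sg gS u w Luw; have [i [x [_ _ _ eq_ui _]]] := Luw.
exists i, (g w); rewrite gS; split=> //.
by apply: (@inL_lt _ e _ (can_inj Sg)); rewrite gS -eq_ui.
Qed.

Theorem theorem2 (n : nat) (e : rel 'I_n) (S : 'I_n -> 'I_n)
  (hP : pattern e) (hS : schedule e S) :
  (forall u w, inL e S u w ->
     exists a b : 'I_n, [/\ (a < b)%N, u = S a & w = S b]) /\
  (forall (R : realFieldType) (f : 'I_n -> R),
     (forall k z : 'I_n, chosen e S k z -> f (S k) < f (S z)) ->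
     forall u w, inL e S u w -> f w < f u).
Proof.
have [S_bij _] := hS.
have indices := @inL_indices _ e _ S_bij.
split=> // R f f_chosen u w /[dup] Luw /indices [a [b [_ eq_ua eq_wb]]].
by rewrite eq_ua eq_wb in Luw *; exact: (@chosen_order_inL _ e _ (bij_inj S_bij) _ _ f_chosen).
Qed.
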